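(* Let $\mathcal N$ be a normal network on $X$. If $\mathcal N$ has at least one reticulation and $|X|\ge 4$, or $\mathcal N$ has at least two reticulations, or $|X|\ge 5$, then $\mathcal N$ displays at least one quad.
   Context: Phylogenetic network on $X$ (rooted, binary): rooted acyclic digraph without parallel arcs; root has in-degree $0$, out-degree $2$; leaves (out-degree $0$) have in-degree $1$ and form $X$; other vertices are tree vertices (in-degree $1$, out-degree $2$) or reticulations (in-degree $2$, out-degree $1$). A reticulation arc $(u,v)$ is a shortcut if another directed path from $u$ to $v$ exists. Tree-child: every non-leaf vertex has a child that is a tree vertex or leaf; normal: tree-child with no shortcuts. A quad is a caterpillar on four leaves, i.e. a rooted binary phylogenetic tree $(x_1,x_2,x_3,x_4)$ in which $x_1,x_2$ share a parent $p$, the parent of $x_3$ is the parent of $p$, and the parent of $x_4$ is the parent of the parent of $x_3$. The network displays a tree on a subset of $X$ if the tree can be obtained from the network by deleting arcs and vertices and suppressing in-degree-one out-degree-one vertices. *)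

From mathcomp Require Import all_boot.
Set Implicit Arguments. Unset Strict Implicit. Unset Printing Implicit Defensive.

(* A directed graph on a finite vertex type V is given by its arc relation
   a : rel V (a u v = there is an arc (u,v)); this excludes parallel arcs. *)
Section Net.
Variables (V : finType) (a : rel V).

Definition indeg (v : V) : nat := #|[pred u | a u v]|.
Definition outdeg (v : V) : nat := #|[pred w | a v w]|.

Definition dpath (u v : V) (s : seq V) : bool :=
  [&& path a u s, last u s == v & s != [::]].

(* interior vertices of the path u :: s (all but the endpoints) *)
Definition interior (s : seq V) : seq V := take (size s).-1 s.

Definition acyclic : Prop :=
  forall (v : V) (s : seq V), path a v s -> last v s = v -> s = [::].

Definition is_root (v : V) : bool := (indeg v == 0) && (outdeg v == 2).
Definition is_leaf (v : V) : bool := (indeg v == 1) && (outdeg v == 0).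
Definition is_tree_vertex (v : V) : bool := (indeg v == 1) && (outdeg v == 2).
Definition is_reticulation (v : V) : bool := (indeg v == 2) && (outdeg v == 1).

(* rooted binary phylogenetic network (leaf set X = the set of leaves) *)
Definition phylo_network : Prop :=
  acyclic /\
  exists rho : V, is_root rho /\
    forall v : V, v != rho ->
      [|| is_leaf v, is_tree_vertex v | is_reticulation v].

Definition tree_child : Prop :=
  forall v : V, ~~ is_leaf v ->
    exists w : V, a v w && (is_tree_vertex w || is_leaf w).

(* reticulation arc (u,v) is a shortcut if another directed path u ~> v exists *)
Definition no_shortcuts : Prop :=
  forall (u v : V) (s : seq V),
    a u v -> is_reticulation v -> dpath u v s -> s = [:: v].

Definition normal_network : Prop :=
  [/\ phylo_network, tree_child & no_shortcuts].

Definition num_leaves : nat := #|[pred v | is_leaf v]|.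
Definition num_reticulations : nat := #|[pred v | is_reticulation v]|.

(* N displays the quad (x1,x2,x3,x4): N contains a subdivision of the
   caterpillar with internal vertices p (parent of x1,x2), q (parent of
   p and x3), r (root, parent of q and x4), i.e. images r,q,p and six
   directed paths, one for each tree arc, whose interiors are pairwise
   disjoint and avoid the seven images, the images being distinct.
   Deleting everything else and suppressing yields the quad. *)
Definition displays_quad_on (x1 x2 x3 x4 : V) : Prop :=
  [/\ is_leaf x1, is_leaf x2, is_leaf x3 & is_leaf x4] /\
  exists (r q p : V) (srq srx4 sqp sqx3 spx1 spx2 : seq V),
    [/\ dpath r q srq, dpath r x4 srx4, dpath q p sqp,
        dpath q x3 sqx3 & dpath p x1 spx1] /\ dpath p x2 spx2 /\
        uniq (flatten [:: interior srq; interior srx4; interior sqp;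
                          interior sqx3; interior spx1; interior spx2]
              ++ [:: r; q; p; x1; x2; x3; x4]).

Definition displays_a_quad : Prop :=
  exists x1 x2 x3 x4 : V, displays_quad_on x1 x2 x3 x4.

End Net.

(* In a tree-child network every vertex x has a tree path: repeatedly step to a
   child that is a tree vertex or a leaf, until a leaf is reached.  Tree vertices
   and leaves have a single parent, so tree paths starting at distinct children
   x, y of u, u' can only meet if one of them passes through u' or u; and in a
   normal network the two parents of a reticulation are incomparable.
   Suppose a child cr of r has a tree path through a tree vertex q, and a child cq
   of q has a tree path through a tree vertex p.  Then the tree paths cr ~> q and
   cq ~> p, and the tree paths from the other children of r and q and from both
   children of p down to leaves x4, x3, x1, x2, are pairwise disjoint, so they
   display the quad (x1, x2, x3, x4).  Every tree vertex q has such an r above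
   it, so otherwise no tree vertex lies on a tree path below a tree vertex.  Then
   every tree vertex is a child of the root and every reticulation is a child of
   both children of the root; hence there is at most one reticulation, at most
   four leaves, and at most three leaves if there is a reticulation. *)

From mathcomp Require Import all_boot zify.
Set Implicit Arguments. Unset Strict Implicit. Unset Printing Implicit Defensive.

Lemma fconnect_iterP (T : finType) (f : T -> T) x y :
  reflect (exists k, y = iter k f x) (fconnect f x y).
Proof.
apply: (iffP idP) => [/iter_findex <-|[k ->]]; [by eexists | exact: fconnect_iter].
Qed.

(* The endpoints are listed in the order of the vertex list of [displays_quad_on]. *)
Lemma perm_quad_interiors (T : eqType) (r : T) (s1 s2 s3 s4 s5 s6 : seq T)
    (e1 e2 e3 e4 e5 e6 : T) :
  perm_eq (flatten [:: s1; s2; s3; s4; s5; s6] ++ [:: r; e1; e3; e5; e6; e4; e2])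
    (r :: flatten [:: rcons s1 e1; rcons s2 e2; rcons s3 e3;
                      rcons s4 e4; rcons s5 e5; rcons s6 e6]).
Proof.
apply/permP => P; rewrite /= -!cats1 !count_cat /= !addn0.
by move: (P r : nat) (P e1 : nat) (P e2 : nat) (P e3 : nat) (P e4 : nat) (P e5 : nat)
  (P e6 : nat) => *; lia.
Qed.

Section Network.
Variables (V : finType) (a : rel V).

Lemma indeg1_parent_uniq v u u' : indeg a v = 1 -> a u v -> a u' v -> u = u'.
Proof.
move=> deg1 uv u'v.
have /card_le1_eqP : #|[pred x | a x v]| <= 1 by rewrite -/(indeg a v) deg1.
by apply; rewrite inE.
Qed.

Lemma outdeg1_child_uniq v w w' : outdeg a v = 1 -> a v w -> a v w' -> w = w'.
Proof.
move=> deg1 vw vw'.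
have /card_le1_eqP : #|[pred x | a v x]| <= 1 by rewrite -/(outdeg a v) deg1.
by apply; rewrite inE.
Qed.

Lemma indeg0_arcF u v : indeg a v = 0 -> a u v = false.
Proof. by move/card0_eq/(_ u); rewrite inE. Qed.

Lemma outdeg0_arcF v w : outdeg a v = 0 -> a v w = false.
Proof. by move/card0_eq/(_ w); rewrite inE. Qed.

Lemma arc_nonleaf u v : a u v -> ~~ is_leaf a u.
Proof. by apply: contraTN => /andP [_ /eqP /outdeg0_arcF ->]. Qed.

Lemma indeg2_parents v : indeg a v = 2 -> exists u u', [/\ a u v, a u' v & u != u'].
Proof.
move=> deg2; have /card_gt1P [u [u' []]] : 1 < #|[pred x | a x v]|.
  by rewrite -/(indeg a v) deg2.
by rewrite !inE; exists u, u'.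
Qed.

Lemma outdeg2_children v : outdeg a v = 2 ->
  exists c c', c != c' /\ forall w, a v w = (w == c) || (w == c').
Proof.
move=> deg2; have /cards2P [c [c' [neq cc']]] : #|[set w | a v w]| == 2.
  by rewrite cardsE -/(outdeg a v) deg2.
by exists c, c'; split => // w; rewrite -in_set2 -cc' inE.
Qed.

Lemma outdeg2_three v x y z : outdeg a v = 2 -> a v x -> a v y -> a v z ->
  x != y -> x != z -> y = z.
Proof.
case/outdeg2_children => [c [c' [_ vE]]]; rewrite !vE.
by do 3 case/orP=> /eqP->; rewrite ?eqxx.
Qed.

Lemma outdeg2_other_child v c : outdeg a v = 2 -> a v c -> exists2 c', a v c' & c' != c.
Proof.
case/outdeg2_children => [d [d' [dd' vE]]]; rewrite vE => /orP [] /eqP ->.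
  by exists d'; rewrite ?vE ?eqxx ?orbT // eq_sym.
by exists d; rewrite ?vE ?eqxx.
Qed.

(* [tchild v] is a child of [v] that is a tree vertex or a leaf, and [v] itself
   when [v] is a leaf; so [fconnect tchild x] is the tree path from [x] down to
   a leaf. *)
Definition tchild (v : V) : V :=
  odflt v [pick w | a v w && (is_tree_vertex a w || is_leaf a w)].

Lemma tchild_leaf v : is_leaf a v -> tchild v = v.
Proof.
case/andP => _ /eqP out0; rewrite /tchild; case: pickP => //= w.
by rewrite (outdeg0_arcF _ out0).
Qed.

Lemma iter_tchild_leaf x i j : is_leaf a (iter i tchild x) -> i <= j ->
  iter j tchild x = iter i tchild x.
Proof. by move=> leaf /subnK <-; elim: (j - i) => //= k ->; rewrite tchild_leaf. Qed.

Hypothesis tc : tree_child a.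

Lemma tchildP v : ~~ is_leaf a v -> a v (tchild v) /\ indeg a (tchild v) = 1.
Proof.
move=> nleaf; rewrite /tchild.
case: pickP => /= [w /andP [-> /orP [] /andP [/eqP] //]|none].
by case: (tc nleaf) => w vw; move: (none w); rewrite vw.
Qed.

Lemma connect_tchild v : connect a v (tchild v).
Proof.
have [/tchild_leaf -> //|/tchildP [vw _]] := boolP (is_leaf a v).
exact: connect1.
Qed.

Lemma fconnect_tchild_connect x w : fconnect tchild x w -> connect a x w.
Proof.
case/fconnect_iterP => k ->; elim: k => //= k IH.
exact: connect_trans IH (connect_tchild _).
Qed.

Lemma fconnect_tchild_parent u v y : a u v -> fconnect tchild y v ->
  v = y \/ fconnect tchild y u /\ tchild u = v.
Proof.
move=> uv /fconnect_iterP [k vE]; subst v; elim: k uv => [|i IH] /=; first by left.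
set z := iter i tchild y; have [leaf|nleaf] := boolP (is_leaf a z).
  by rewrite tchild_leaf //; apply: IH.
case: (tchildP nleaf) => zt deg1 ut; right.
by rewrite -(indeg1_parent_uniq deg1 zt ut) fconnect_iter.
Qed.

Lemma fconnect_tchild_merge x y w : fconnect tchild x w -> fconnect tchild y w ->
  fconnect tchild x y || fconnect tchild y x.
Proof.
case/fconnect_iterP => i ->; elim: i x => [|i IH] x; first by rewrite orbC => ->.
rewrite iterSr => /IH /orP [ty|yt]; first by rewrite (connect_trans (fconnect1 _ _) ty).
have [/tchild_leaf tx|/tchildP [xt _]] := boolP (is_leaf a x).
  by rewrite -tx yt orbT.
by case: (fconnect_tchild_parent xt yt) => [<-|[->]]; rewrite ?fconnect1 ?orbT.
Qed.

Definition tree_path x e : seq V := traject tchild x (findex tchild x e).+1.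

Definition on_tree_path x e w : bool := fconnect tchild x w && fconnect tchild w e.

Lemma uniq_tree_path x e : fconnect tchild x e -> uniq (tree_path x e).
Proof.
move/findex_max => lt_eo.
by rewrite /tree_path -(take_traject tchild x lt_eo) take_uniq ?orbit_uniq.
Qed.

Lemma tree_path_rcons x e : fconnect tchild x e ->
  tree_path x e = rcons (interior (tree_path x e)) e.
Proof.
move=> xe; rewrite /interior /tree_path trajectSr size_rcons -cats1 take_size_cat //.
by rewrite iter_findex // cats1.
Qed.

Lemma mem_tree_path x e w : fconnect tchild x e -> w \in tree_path x e -> on_tree_path x e w.
Proof.
move=> /iter_findex {2}<- /trajectP [i /ltnSE le_ik ->].
by rewrite /on_tree_path fconnect_iter -(subnK le_ik) iterD fconnect_iter.
Qed.

Lemma tree_path_nonleaf x e i : fconnect tchild x e -> i < findex tchild x e ->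
  ~~ is_leaf a (iter i tchild x).
Proof.
move=> xe lt_ie; apply/negP => /iter_tchild_leaf /(_ (ltnW lt_ie)).
rewrite iter_findex // => eE.
have lt_io : i < order tchild x := ltn_trans lt_ie (findex_max xe).
by move: lt_ie; rewrite eE findex_iter // ltnn.
Qed.

Lemma tree_path_dpath u x e : a u x -> fconnect tchild x e -> dpath a u e (tree_path x e).
Proof.
move=> ux xe; rewrite /dpath /tree_path trajectS /= ux last_traject iter_findex // eqxx andbT.
have := tree_path_nonleaf xe; move: (findex tchild x e) => k.
elim: k x {ux xe} => //= k IH x nonleaf.
case: (tchildP (nonleaf 0 isT)) => -> _ /=.
by apply: IH => i lt_ik; rewrite -iterSr nonleaf.
Qed.

Hypothesis acyc : acyclic a.

Lemma connect_antisym x y : connect a x y -> connect a y x -> x = y.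
Proof.
move=> /connectP [s xs ->] /connectP [t yt /esym tx].
have := acyc (v := x) (s := s ++ t); rewrite cat_path last_cat xs yt => /(_ isT tx).
by case: s {xs yt tx}.
Qed.

Lemma arc_connectF u v : a u v -> connect a v u = false.
Proof.
move=> uv; apply/negP => vu; have uu := connect_antisym (connect1 uv) vu; subst v.
by have := acyc (v := u) (s := [:: u]); rewrite /= uv => /(_ isT erefl).
Qed.

Lemma fconnect_tchild_antisym x y : fconnect tchild x y -> fconnect tchild y x -> x = y.
Proof.
by move=> /fconnect_tchild_connect xy /fconnect_tchild_connect; apply: connect_antisym.
Qed.

Lemma fconnect_tchild_above n u x : connect a n u -> a u x -> fconnect tchild x n = false.
Proof.
move=> nu ux; apply/negP => /fconnect_tchild_connect xn.
by have := arc_connectF ux; rewrite (connect_trans xn nu).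
Qed.

Lemma exists_leaf_below x : exists2 l, fconnect tchild x l & is_leaf a l.
Proof.
set n := (order tchild x).-1; set z := iter n tchild x.
exists z; first exact: fconnect_iter.
apply/negPn/negP => /tchildP [zt _].
have xz' : fconnect tchild x (tchild z) by rewrite -iterS fconnect_iter.
have le_in : findex tchild x (tchild z) <= n.
  by rewrite -ltnS prednK ?order_gt0 // findex_max.
have zE : z = iter (n - findex tchild x (tchild z)) tchild (tchild z).
  by rewrite -{2}(iter_findex xz') -iterD subnK.
have : fconnect tchild (tchild z) z by rewrite {2}zE fconnect_iter.
by move/fconnect_tchild_connect; rewrite arc_connectF.
Qed.

Lemma tree_paths_meet u x u' y w : a u x -> a u' y -> x != y ->
  fconnect tchild x w -> fconnect tchild y w ->
  (fconnect tchild x u' && fconnect tchild u' w) ||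
  (fconnect tchild y u && fconnect tchild u w).
Proof.
move=> ux u'y xy xw yw.
have through v z t : a v z -> fconnect tchild t z -> t != z -> fconnect tchild z w ->
    fconnect tchild t v && fconnect tchild v w.
  move=> vz tz tz' zw; case: (fconnect_tchild_parent vz tz) => [zt|[tv vzE]].
    by rewrite zt eqxx in tz'.
  by rewrite tv (connect_trans (fconnect1 _ _)) ?vzE.
case/orP: (fconnect_tchild_merge xw yw) => [xy'|yx'].
  by rewrite (through _ _ _ u'y xy' xy yw).
by rewrite (through _ _ _ ux yx') ?orbT // eq_sym.
Qed.

Lemma sibling_tree_pathsF u x y w : a u x -> a u y -> x != y ->
  fconnect tchild x w -> fconnect tchild y w = false.
Proof.
move=> ux uy xy xw; apply/negP => yw; have := tree_paths_meet ux uy xy xw yw.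
by rewrite !(fconnect_tchild_above (connect0 _ _) ux, fconnect_tchild_above (connect0 _ _) uy).
Qed.

Lemma tree_paths_disjoint u x e u' y e' w : a u x -> a u' y -> x != y ->
  fconnect tchild x e -> fconnect tchild y e' ->
  (on_tree_path x e u' -> u' = e) -> (on_tree_path y e' u -> u = e') ->
  w \in tree_path x e -> w \in tree_path y e' -> False.
Proof.
move=> ux u'y xy xe ye' avoid avoid'.
move=> /(mem_tree_path xe) /andP [xw we] /(mem_tree_path ye') /andP [yw we'].
have half v z t f : a v z -> fconnect tchild z w -> fconnect tchild w f ->
    (on_tree_path t f v -> v = f) -> fconnect tchild t v && fconnect tchild v w -> False.
  move=> vz zw wf avoid_v /andP [tv vw].
  have vf : v = f by apply: avoid_v; rewrite /on_tree_path tv (connect_trans vw wf).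
  subst f; have vwE := fconnect_tchild_antisym vw wf; subst w.
  by rewrite (fconnect_tchild_above (connect0 _ _) vz) in zw.
case/orP: (tree_paths_meet ux u'y xy xw yw); first exact: half u'y yw we avoid.
exact: half ux xw we' avoid'.
Qed.

(* A segment [(u, x, e)] stands for the arc [u -> x] followed by the tree path
   from [x] to [e]. *)
Definition seg_path (s : V * V * V) : seq V := let: (_, x, e) := s in tree_path x e.

Definition tree_segment (s : V * V * V) : bool :=
  let: (u, x, e) := s in a u x && fconnect tchild x e.

Lemma uniq_flatten_tree_paths (parents : seq V) (ss : seq (V * V * V)) :
  all tree_segment ss -> all (fun '(u, _, _) => u \in parents) ss ->
  all (fun '(u, x, e) =>
         all (fun n => connect a n u || (on_tree_path x e n ==> (n == e))) parents) ss ->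
  uniq [seq s.1.2 | s <- ss] -> uniq (flatten [seq seg_path s | s <- ss]).
Proof.
have avoidP n u x e : a u x -> connect a n u || (on_tree_path x e n ==> (n == e)) ->
    on_tree_path x e n -> n = e.
  move=> ux /orP [nu|/implyP avoid /avoid /eqP //].
  by rewrite /on_tree_path (fconnect_tchild_above nu ux).
elim: ss => //= [[[u x] e] ss IH] /andP [/andP [ux xe] valid] /andP [u_in parents_in].
case/andP=> /allP avoid_x avoid /andP [x_new uniq_ss].
rewrite cat_uniq uniq_tree_path // IH // andbT.
apply/hasPn => w /flatten_mapP [[[u' y] e'] ss_s /= wy]; apply/negP => wx.
have /andP [u'y ye'] := allP valid _ ss_s.
have xy : x != y by apply: contraNneq x_new => ->; apply: (map_f _ ss_s).
apply: (tree_paths_disjoint ux u'y xy xe ye' _ _ wx wy).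
  exact: avoidP ux (avoid_x _ (allP parents_in _ ss_s)).
exact: avoidP u'y (allP (allP avoid _ ss_s) _ u_in).
Qed.

Lemma notin_flatten_tree_paths n (ss : seq (V * V * V)) :
  all tree_segment ss -> all (fun '(u, _, _) => connect a n u) ss ->
  n \notin flatten [seq seg_path s | s <- ss].
Proof.
move=> /allP valid /allP above; apply/flatten_mapP => [[[[u x] e] ss_s /=]].
have /andP [ux xe] := valid _ ss_s.
by case/(mem_tree_path xe)/andP; rewrite (fconnect_tchild_above (above _ ss_s) ux).
Qed.

Variable rho : V.
Hypothesis root_rho : is_root a rho.
Hypothesis vertex_kind : forall v, v != rho ->
  [|| is_leaf a v, is_tree_vertex a v | is_reticulation a v].

Lemma arc_rhoF u : a u rho = false.
Proof. by case/andP: root_rho => /eqP /indeg0_arcF. Qed.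

Lemma outdeg_rho : outdeg a rho = 2.
Proof. by case/andP: root_rho => _ /eqP. Qed.

Lemma two_parents_reticulation u u' h : a u h -> a u' h -> u != u' -> is_reticulation a h.
Proof.
move=> uh u'h uu'; have /vertex_kind : h != rho by apply: contraTneq uh => ->; rewrite arc_rhoF.
case/or3P => // /andP [/eqP deg1 _].
all: by rewrite (indeg1_parent_uniq deg1 uh u'h) eqxx in uu'.
Qed.

Lemma outdeg2_or_reticulation x v : a x v -> (outdeg a x == 2) || is_reticulation a x.
Proof.
move=> xv; have [->|/vertex_kind] := eqVneq x rho; first by rewrite outdeg_rho.
case/or3P => [/andP [_ /eqP out0]|/andP [_ ->] //|->]; last by rewrite orbT.
by rewrite (outdeg0_arcF _ out0) in xv.
Qed.

Lemma outdeg2_tree_vertex y : y != rho -> outdeg a y = 2 -> is_tree_vertex a y.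
Proof. by move/vertex_kind => /or3P [] // /andP [_ /eqP ->]. Qed.

Lemma reticulation_nonleaf x : is_reticulation a x -> ~~ is_leaf a x.
Proof. by case/andP => /eqP in2; rewrite /is_leaf in2. Qed.

Lemma reticulation_tchild x v : is_reticulation a x -> a x v -> v = tchild x.
Proof.
move=> xret xv; have [xt _] := tchildP (reticulation_nonleaf xret).
by case/andP: xret => _ /eqP out1; apply: outdeg1_child_uniq out1 xv xt.
Qed.

Lemma reticulation_parent_outdeg2 y h : a y h -> is_reticulation a h -> outdeg a y = 2.
Proof.
move=> yh hret; case/orP: (outdeg2_or_reticulation yh) => [/eqP //|yret].
have [_] := tchildP (reticulation_nonleaf yret).
by rewrite -(reticulation_tchild yret yh); case/andP: hret => /eqP ->.
Qed.

Lemma reticulation_nonroot_parent h : is_reticulation a h -> exists2 y, a y h & y != rho.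
Proof.
case/andP => /eqP /indeg2_parents [y [y' [yh y'h yy']]] _.
have [yE|] := eqVneq y rho; last by exists y.
by exists y'; rewrite // -yE eq_sym.
Qed.

Hypothesis noshort : no_shortcuts a.

Lemma parents_incomparable u u' h : a u h -> a u' h -> u != u' -> connect a u u' = false.
Proof.
move=> uh u'h uu'; apply/negP => /connectP [s us u'E].
have := noshort uh (two_parents_reticulation uh u'h uu') (s := rcons s h).
rewrite /dpath rcons_path us -u'E u'h last_rcons eqxx -size_eq0 size_rcons => /(_ isT).
by case: s {us} u'E => [/= u'E|z [|y s]] //; rewrite u'E eqxx in uu'.
Qed.

Lemma comparable_children_neq u u' x y :
  connect a u u' -> u != u' -> a u x -> a u' y -> x != y.
Proof.
move=> uu' neq ux u'y; apply: contraTneq uu' => xy.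
by rewrite (parents_incomparable ux) // xy.
Qed.

Section Chain.
Variables r q p cr dr cq dq cp dp x1 x2 x3 x4 : V.
Hypotheses (r_cr : a r cr) (r_dr : a r dr) (cr_dr : cr != dr).
Hypotheses (q_cq : a q cq) (q_dq : a q dq) (cq_dq : cq != dq).
Hypotheses (p_cp : a p cp) (p_dp : a p dp) (cp_dp : cp != dp).
Hypotheses (cr_q : fconnect tchild cr q) (cq_p : fconnect tchild cq p).
Hypotheses (dr_x4 : fconnect tchild dr x4) (dq_x3 : fconnect tchild dq x3).
Hypotheses (cp_x1 : fconnect tchild cp x1) (dp_x2 : fconnect tchild dp x2).

Let connect_rq : connect a r q := connect_trans (connect1 r_cr) (fconnect_tchild_connect cr_q).
Let connect_qp : connect a q p := connect_trans (connect1 q_cq) (fconnect_tchild_connect cq_p).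
Let connect_rp : connect a r p := connect_trans connect_rq connect_qp.

Let neq_rq : r != q.
Proof. by apply: contraFneq (fconnect_tchild_above (connect0 _ _) r_cr) => ->. Qed.

Let neq_qp : q != p.
Proof. by apply: contraFneq (fconnect_tchild_above (connect0 _ _) q_cq) => ->. Qed.

Let neq_rp : r != p.
Proof.
apply: contraFneq (arc_connectF r_cr) => ->.
exact: connect_trans (fconnect_tchild_connect cr_q) connect_qp.
Qed.

Lemma chain_children_uniq : uniq [:: cr; dr; cq; dq; cp; dp].
Proof.
rewrite /= !inE !negb_or cr_dr cq_dq cp_dp /=; repeat (apply/andP; split) => //.
all: first [ by apply: (comparable_children_neq connect_rq neq_rq)
           | by apply: (comparable_children_neq connect_rp neq_rp)
           | by apply: (comparable_children_neq connect_qp neq_qp) ].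
Qed.

Let chain_segments : seq (V * V * V) :=
  [:: (r, cr, q); (r, dr, x4); (q, cq, p); (q, dq, x3); (p, cp, x1); (p, dp, x2)].

Lemma chain_tree_segments : all tree_segment chain_segments.
Proof. by rewrite /= r_cr r_dr q_cq q_dq p_cp p_dp cr_q dr_x4 cq_p dq_x3 cp_x1 dp_x2. Qed.

Lemma chain_segments_avoid_parents :
  all (fun '(u, x, e) =>
         all (fun n => connect a n u || (on_tree_path x e n ==> (n == e))) [:: r; q; p])
      chain_segments.
Proof.
have dr_q : fconnect tchild dr q = false := sibling_tree_pathsF r_cr r_dr cr_dr cr_q.
have dq_p : fconnect tchild dq p = false := sibling_tree_pathsF q_cq q_dq cq_dq cq_p.
have dr_p : fconnect tchild dr p = false.
  apply/negP => drp; have dr_cq := comparable_children_neq connect_rq neq_rq r_dr q_cq.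
  have := tree_paths_meet r_dr q_cq dr_cq drp cq_p.
  by rewrite dr_q (fconnect_tchild_above connect_rq q_cq).
have p_q : fconnect tchild p q = false.
  apply/negP => /fconnect_tchild_connect pq.
  by move: neq_qp; rewrite (connect_antisym connect_qp pq) eqxx.
rewrite /= /on_tree_path !connect0 connect_rq connect_rp connect_qp dr_q dq_p dr_p p_q.
by rewrite !eqxx /= !andbF !implybT !orbT.
Qed.

Hypotheses (x1_leaf : is_leaf a x1) (x2_leaf : is_leaf a x2).
Hypotheses (x3_leaf : is_leaf a x3) (x4_leaf : is_leaf a x4).

Lemma chain_displays_quad : displays_quad_on a x1 x2 x3 x4.
Proof.
split=> //; exists r, q, p, (tree_path cr q), (tree_path dr x4), (tree_path cq p),
  (tree_path dq x3), (tree_path cp x1), (tree_path dp x2).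
split; first by split; apply: tree_path_dpath.
split; first exact: tree_path_dpath.
rewrite (perm_uniq (perm_quad_interiors _ _ _ _ _ _ _ q x4 p x3 x1 x2)) -!tree_path_rcons //.
rewrite cons_uniq (notin_flatten_tree_paths (ss := chain_segments)) ?chain_tree_segments //;
  last by rewrite /= connect0 connect_rq connect_rp.
apply: (uniq_flatten_tree_paths (parents := [:: r; q; p]) (ss := chain_segments)).
- exact: chain_tree_segments.
- by rewrite /= !inE !eqxx !orbT.
- exact: chain_segments_avoid_parents.
- exact: chain_children_uniq.
Qed.

End Chain.

Definition splits_above u w : bool :=
  [&& outdeg a u == 2, is_tree_vertex a w & [exists c, a u c && fconnect tchild c w]].

Lemma splits_aboveP u w : reflect
  [/\ outdeg a u = 2, is_tree_vertex a w & exists2 c, a u c & fconnect tchild c w]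
  (splits_above u w).
Proof.
apply: (iffP and3P) => [[/eqP u2 wt /existsP [c /andP [uc cw]]]|[u2 wt [c uc cw]]].
  by split=> //; exists c.
by rewrite u2; split=> //; apply/existsP; exists c; rewrite uc.
Qed.

Lemma exists_splits_above v : is_tree_vertex a v -> exists u, splits_above u v.
Proof.
move=> vtree; have /card_gt0P [x] : 0 < indeg a v by case/andP: vtree => /eqP ->.
rewrite inE => xv; case/orP: (outdeg2_or_reticulation xv) => [/eqP x2|xret].
  by exists x; apply/splits_aboveP; split=> //; exists v.
have /card_gt0P [y] : 0 < indeg a x by case/andP: xret => /eqP ->.
rewrite inE => yx; exists y; apply/splits_aboveP; split=> //.
  exact: reticulation_parent_outdeg2 yx xret.
by exists x; rewrite // (reticulation_tchild xret xv) fconnect1.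
Qed.

Lemma tree_vertex_splits_displays_quad q p :
  is_tree_vertex a q -> splits_above q p -> displays_a_quad a.
Proof.
move=> /exists_splits_above [r /splits_aboveP [r2 _ [cr r_cr cr_q]]].
case/splits_aboveP=> q2 /andP [_ /eqP p2] [cq q_cq cq_p].
have [dr r_dr dr_cr] := outdeg2_other_child r2 r_cr.
have [dq q_dq dq_cq] := outdeg2_other_child q2 q_cq.
have [cp [dp [cp_dp pE]]] := outdeg2_children p2.
have [x1 cp_x1 x1_leaf] := exists_leaf_below cp.
have [x2 dp_x2 x2_leaf] := exists_leaf_below dp.
have [x3 dq_x3 x3_leaf] := exists_leaf_below dq.
have [x4 dr_x4 x4_leaf] := exists_leaf_below dr.
exists x1, x2, x3, x4.
apply: (chain_displays_quad r_cr r_dr _ q_cq q_dq _ _ _ cp_dp cr_q cq_p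
                            dr_x4 dq_x3 cp_x1 dp_x2);
  by rewrite ?pE ?eqxx ?orbT // eq_sym.
Qed.

Section NoSplitBelowTreeVertex.
Hypothesis nosplit : ~~ [exists q, exists p, is_tree_vertex a q && splits_above q p].

Lemma tree_vertex_rho_child v : is_tree_vertex a v -> a rho v.
Proof.
move=> vtree; have /card_gt0P [x] : 0 < indeg a v by case/andP: vtree => /eqP ->.
rewrite inE => xv; have [<- //|x_rho] := eqVneq x rho.
have split_tree u c : is_tree_vertex a u -> a u c -> fconnect tchild c v -> False.
  move=> ut uc cv; case/negP: nosplit; apply/existsP; exists u; apply/existsP; exists v.
  rewrite ut; apply/splits_aboveP; split=> //; last by exists c.
  by case/andP: ut => _ /eqP.
exfalso; case/orP: (outdeg2_or_reticulation xv) => [/eqP x2|xret].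
  exact: split_tree (outdeg2_tree_vertex x_rho x2) xv (connect0 _ _).
have [y yx y_rho] := reticulation_nonroot_parent xret.
apply: split_tree (outdeg2_tree_vertex y_rho (reticulation_parent_outdeg2 yx xret)) yx _.
by rewrite (reticulation_tchild xret xv) fconnect1.
Qed.

Lemma reticulation_parent_rho_child h y : is_reticulation a h -> a y h -> a rho y.
Proof.
move=> hret yh; have parent_tree y' : a y' h -> y' != rho -> is_tree_vertex a y'.
  by move=> y'h /outdeg2_tree_vertex; apply; apply: reticulation_parent_outdeg2 y'h hret.
have [yE|y_rho] := eqVneq y rho; last exact: tree_vertex_rho_child (parent_tree _ yh y_rho).
have [y' y'h y'_rho] := reticulation_nonroot_parent hret.
have rho_y' := tree_vertex_rho_child (parent_tree _ y'h y'_rho).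
by move: (parents_incomparable yh y'h); rewrite yE eq_sym y'_rho (connect1 rho_y') => /(_ isT).
Qed.

Lemma reticulation_rho_children h c : is_reticulation a h -> a rho c -> a c h.
Proof.
move=> hret rho_c; have /andP [/eqP /indeg2_parents [y [y' [yh y'h yy']]] _] := hret.
have [<- //|yc] := eqVneq y c.
by rewrite -(outdeg2_three outdeg_rho (reticulation_parent_rho_child hret yh)
  (reticulation_parent_rho_child hret y'h) rho_c yy' yc).
Qed.

Lemma num_reticulations_le1 : num_reticulations a <= 1.
Proof.
apply/card_le1_eqP => h h'; rewrite !inE => hret h'ret.
have [c [c' [_ rhoE]]] := outdeg2_children outdeg_rho.
have rho_c : a rho c by rewrite rhoE eqxx.
have ch := reticulation_rho_children hret rho_c.
have [ct tdeg] := tchildP (arc_nonleaf ch).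
have tchild_neq z : is_reticulation a z -> tchild c != z.
  by case/andP => /eqP in2 _; apply: contra_eqN tdeg => /eqP ->; rewrite in2.
exact: outdeg2_three (reticulation_parent_outdeg2 ch hret) ct
  (reticulation_rho_children h'ret rho_c) ch (tchild_neq _ h'ret) (tchild_neq _ hret).
Qed.

Definition leaves_below (c : V) : {set V} :=
  if is_leaf a c then [set c] else [set tchild d | d in [set d | a c d]].

Lemma card_leaves_below c : a rho c -> #|leaves_below c| <= 2.
Proof.
move=> rho_c; rewrite /leaves_below; case: ifP => [_|cleaf]; first by rewrite cards1.
apply: leq_trans (leq_imset_card _ _) _; rewrite cardsE -/(outdeg a c).
have c_rho : c != rho by apply: contraTneq rho_c => ->; rewrite arc_rhoF.
case/or3P: (vertex_kind c_rho) => [|/andP [_ /eqP -> //]|cret]; first by rewrite cleaf.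
by have := reticulation_parent_rho_child cret rho_c; rewrite arc_rhoF.
Qed.

Lemma leaf_in_leaves_below l : is_leaf a l -> exists2 c, a rho c & l \in leaves_below c.
Proof.
move=> lleaf; have /card_gt0P [x] : 0 < indeg a l by case/andP: lleaf => /eqP ->.
rewrite inE => xl; have below_x : l \in [set tchild d | d in [set d | a x d]].
  by apply/imsetP; exists l; rewrite ?inE ?tchild_leaf.
have [<-|x_rho] := eqVneq x rho.
  by exists l => //; rewrite /leaves_below lleaf set11.
case/or3P: (vertex_kind x_rho) => [|xtree|xret]; first by rewrite (negbTE (arc_nonleaf xl)).
  by exists x; rewrite ?tree_vertex_rho_child // /leaves_below (negbTE (arc_nonleaf xl)).
have /andP [/eqP /indeg2_parents [y [_ [yx _ _]]] _] := xret.
exists y; first exact: reticulation_parent_rho_child xret yx.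
rewrite /leaves_below (negbTE (arc_nonleaf yx)); apply/imsetP; exists x; rewrite ?inE //.
exact: reticulation_tchild xret xl.
Qed.

Lemma num_leaves_le_leaves_below : exists c1 c2,
  [/\ a rho c1, a rho c2 & num_leaves a <= #|leaves_below c1 :|: leaves_below c2|].
Proof.
have [c1 [c2 [_ rhoE]]] := outdeg2_children outdeg_rho.
exists c1, c2; rewrite !rhoE !eqxx ?orbT; split=> //.
apply/subset_leq_card/subsetP => l; rewrite inE => /leaf_in_leaves_below [c].
by rewrite rhoE inE => /orP [] /eqP-> ->; rewrite ?orbT.
Qed.

Lemma num_leaves_le4 : num_leaves a <= 4.
Proof.
have [c1 [c2 [rho_c1 rho_c2 le_leaves]]] := num_leaves_le_leaves_below.
apply: leq_trans le_leaves _; rewrite cardsU; apply: leq_trans (leq_subr _ _) _.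
exact: leq_add (card_leaves_below rho_c1) (card_leaves_below rho_c2).
Qed.

Lemma num_leaves_le3 : 0 < num_reticulations a -> num_leaves a <= 3.
Proof.
case/card_gt0P => h; rewrite inE => hret.
have [c1 [c2 [rho_c1 rho_c2 le_leaves]]] := num_leaves_le_leaves_below.
have shared c : a rho c -> tchild h \in leaves_below c.
  move=> rho_c; have ch := reticulation_rho_children hret rho_c.
  by rewrite /leaves_below (negbTE (arc_nonleaf ch)); apply/imsetP; exists h; rewrite ?inE.
have : 0 < #|leaves_below c1 :&: leaves_below c2|.
  by apply/card_gt0P; exists (tchild h); rewrite inE !shared.
move: le_leaves (card_leaves_below rho_c1) (card_leaves_below rho_c2); rewrite cardsU.
lia.
Qed.

End NoSplitBelowTreeVertex.

End Network.

Theorem mainTheorem8 (V : finType) (a : rel V) :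
  normal_network a ->
  [\/ (1 <= num_reticulations a) && (4 <= num_leaves a),
      2 <= num_reticulations a
    | 5 <= num_leaves a] ->
  displays_a_quad a.
Proof.
move=> [[acyc [rho [root_rho vertex_kind]]] tc noshort] large.
have [/existsP [q /existsP [p /andP [qtree qp]]]|nosplit] :=
  boolP [exists q, exists p, is_tree_vertex a q && splits_above a q p].
  exact: (tree_vertex_splits_displays_quad tc acyc root_rho vertex_kind noshort qtree qp).
have ret_le1 := num_reticulations_le1 tc root_rho vertex_kind noshort nosplit.
have leaves_le4 := num_leaves_le4 tc root_rho vertex_kind noshort nosplit.
have leaves_le3 := num_leaves_le3 tc root_rho vertex_kind noshort nosplit.
case: large => [/andP [ret_ge1 leaves_ge4]|ret_ge2|leaves_ge5]; exfalso.
- by move: (leaves_le3 ret_ge1); rewrite leqNgt leaves_ge4.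
- by move: ret_le1; rewrite leqNgt (leq_trans _ ret_ge2).
- by move: leaves_le4; rewrite leqNgt leaves_ge5.
Qed.
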